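(* Let $\mathcal D$ be a finite doset on a poset $\mathcal P$ which has a unique minimal element $\alpha_0$, and let $A$ be an algebra with straightening law on $\mathcal D$. Write $A=\mathbb{C}[\mathcal D]/J$, where $\mathbb{C}[\mathcal D]$ is the polynomial ring in variables $x_{(\alpha,\beta)}$, $(\alpha,\beta)\in\mathcal D$, and $J$ is the kernel of the surjection $x_{(\alpha,\beta)}\mapsto p_{(\alpha,\beta)}$. Then $J$ is saturated: if $f\in\mathbb{C}[\mathcal D]$ and $N\in\mathbb{N}$ satisfy $x^N f\in J$ for every variable $x$, then $f\in J$.
   Context: A doset on a poset $\mathcal P$ is a set $\mathcal D$ with $\Delta_{\mathcal P}\subseteq\mathcal D\subseteq\{(\alpha,\beta)\in\mathcal P\times\mathcal P\mid\alpha\le\beta\}$ ($\Delta_{\mathcal P}$ the diagonal) such that whenever $\alpha\le\beta\le\gamma$, $(\alpha,\gamma)\in\mathcal D$ iff both $(\alpha,\beta)\in\mathcal D$ and $(\beta,\gamma)\in\mathcal D$; it is ordered by $(\alpha,\beta)\le(\gamma,\delta)$ iff $\beta\le\gamma$; one writes $\alpha$ for $(\alpha,\alpha)$. A monomial $p_{(\alpha_1,\beta_1)}\cdots p_{(\alpha_k,\beta_k)}$ is standard if $\alpha_1\le\beta_1\le\alpha_2\le\dots\le\alpha_k\le\beta_k$. A graded $\mathbb{C}$-algebra $A=\bigoplus_{q\ge0}A_q$ is an algebra with straightening law on $\mathcal D$ if there is an injection $\mathcal D\ni(\alpha,\beta)\mapsto p_{(\alpha,\beta)}\in A_1$ such that: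 (1) the $p_{(\alpha,\beta)}$ generate $A$; (2) the standard monomials form a $\mathbb{C}$-basis of $A$; (3) if a monomial $p_{(\alpha_1,\beta_1)}\cdots p_{(\alpha_k,\beta_k)}$ (factors ordered so that the sequence $\alpha_1,\beta_1,\dots,\alpha_k,\beta_k$ is the one being compared) equals $\sum_j c_j p_{(\alpha_{j1},\beta_{j1})}\cdots p_{(\alpha_{jk},\beta_{jk})}$ as a combination of distinct standard monomials, then each sequence $(\alpha_{j1},\beta_{j1},\dots,\alpha_{jk},\beta_{jk})$ is lexicographically smaller than $(\alpha_1,\beta_1,\dots,\alpha_k,\beta_k)$ (at the first differing position the new entry is smaller); (4) if $\alpha_1\le\alpha_2\le\alpha_3\le\alpha_4$ and for some permutation $\sigma\in S_4$ both $(\alpha_{\sigma(1)},\alpha_{\sigma(2)})$ and $(\alpha_{\sigma(3)},\alpha_{\sigma(4)})$ lie in $\mathcal D$, then $p_{(\alpha_{\sigma(1)},\alpha_{\sigma(2)})}p_{(\alpha_{\sigma(3)},\alpha_{\sigma(4)})}=\pm p_{(\alpha_1,\alpha_2)}p_{(\alpha_3,\alpha_4)}+\sum_i r_i m_i$ with the $m_i$ quadratic standard monomials distinct from $p_{(\alpha_1,\alpha_2)}p_{(\alpha_3,\alpha_4)}$. *)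

From mathcomp Require Import all_boot all_order all_algebra.
From mathcomp Require Import complex Rstruct.
From mathcomp Require Export mpoly.

Set Implicit Arguments.
Unset Strict Implicit.
Unset Printing Implicit Defensive.

Import Order.TTheory GRing.Theory Num.Theory.
Local Open Scope ring_scope.

Definition CC : numClosedFieldType := complex Rdefinitions.R.

Section Doset.
Variables (disp : Order.disp_t) (P : finPOrderType disp).

Definition is_doset (D : {set P * P}) : Prop :=
  [/\ forall a : P, (a, a) \in D,
      forall x : P * P, x \in D -> (x.1 <= x.2)%O &
      forall a b c : P, (a <= b)%O -> (b <= c)%O ->
        ((a, c) \in D) = ((a, b) \in D) && ((b, c) \in D)].

Definition doset_le (x y : P * P) : bool := (x.2 <= y.1)%O.

Definition unique_minimal (a0 : P) : Prop :=
  forall b : P, (forall c : P, ~~ (c < b)%O) <-> b = a0.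

Definition standard (D : {set P * P}) (s : seq (P * P)) : bool :=
  all (fun x => x \in D) s && sorted doset_le s.

Definition flat_seq (s : seq (P * P)) : seq P :=
  flatten [seq [:: x.1; x.2] | x <- s].

Fixpoint lex_lt (u v : seq P) : bool :=
  match u, v with
  | a :: u', b :: v' => (a < b)%O || ((a == b) && lex_lt u' v')
  | _, _ => false
  end.

Variables (A : comAlgType CC) (p : P * P -> A).

Definition pmon (s : seq (P * P)) : A := \prod_(x <- s) p x.

Definition lincomb (S : seq (CC * seq (P * P))) : A :=
  \sum_(x <- S) x.1 *: pmon x.2.

End Doset.

Definition graded (A : comAlgType CC) (G : nat -> {pred A}) : Prop :=
  [/\ (forall q, 0 \in G q) /\
      (forall q (x y : A), x \in G q -> y \in G q -> x + y \in G q) /\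
      (forall q (c : CC) (x : A), x \in G q -> c *: x \in G q),
      (forall q r (x y : A), x \in G q -> y \in G r -> x * y \in G (q + r)%N),
      (forall a : A, exists (n : nat) (f : nat -> A),
          (forall q, f q \in G q) /\ a = \sum_(q < n) f q) &
      (forall (n : nat) (f : nat -> A), (forall q, f q \in G q) ->
          \sum_(q < n) f q = 0 -> forall q, (q < n)%N -> f q = 0)].

(* The evaluation C[D] -> A, x_(alpha,beta) |-> p_(alpha,beta); the variables
   of C[D] are indexed by 'I_#|D|, the i-th variable being x_(enum_val i). *)
Definition asl_eval (disp : Order.disp_t) (P : finPOrderType disp)
  (D : {set P * P}) (A : comAlgType CC) (p : P * P -> A)
  (f : {mpoly CC[#|D|]}) : A :=
  mmap (fun c : CC => c%:A) (fun i : 'I_#|D| => p (enum_val i)) f.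
Arguments asl_eval {disp P} D {A} p f.

Definition is_ASL (disp : Order.disp_t) (P : finPOrderType disp)
  (D : {set P * P}) (A : comAlgType CC) (G : nat -> {pred A})
  (p : P * P -> A) : Prop :=
  [/\ graded G /\
      ({in D &, injective p} /\ (forall x, x \in D -> p x \in G 1%N)),
      (forall a : A, exists f : {mpoly CC[#|D|]}, asl_eval D p f = a),
      (forall a : A, exists S : seq (CC * seq (P * P)),
          all (fun x => standard D x.2) S /\ a = lincomb p S)
      /\
      (forall S : seq (CC * seq (P * P)),
          uniq (map snd S) -> all (fun x => standard D x.2) S ->
          lincomb p S = 0 -> all (fun x => x.1 == 0) S),
      (forall (s : seq (P * P)) (S : seq (CC * seq (P * P))),
          all (fun x => x \in D) s -> ~~ standard D s ->
          uniq (map snd S) -> all (fun x => standard D x.2) S ->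
          all (fun x => size x.2 == size s) S ->
          all (fun x => x.1 != 0) S ->
          pmon p s = lincomb p S ->
          all (fun x => lex_lt (flat_seq x.2) (flat_seq s)) S) &
      (forall a1 a2 a3 a4 b1 b2 b3 b4 : P,
          (a1 <= a2)%O -> (a2 <= a3)%O -> (a3 <= a4)%O ->
          perm_eq [:: b1; b2; b3; b4] [:: a1; a2; a3; a4] ->
          (b1, b2) \in D -> (b3, b4) \in D ->
          exists (e : bool) (S : seq (CC * seq (P * P))),
            all (fun x => standard D x.2 && (size x.2 == 2%N)
                          && (x.2 != [:: (a1, a2); (a3, a4)])) S /\
            p (b1, b2) * p (b3, b4)
              = (-1) ^+ e * (p (a1, a2) * p (a3, a4)) + lincomb p S)].

From mathcomp Require Import all_boot all_order all_algebra.
From mathcomp Require Import mpoly.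
Import Order.TTheory GRing.Theory.
Local Open Scope ring_scope.

(* As a0 is below every element of P, the pair (a0, a0) precedes every element
   of the doset, so prepending it to a standard monomial gives a standard
   monomial, and distinct ones stay distinct.  Linear independence of standard
   monomials then makes p (a0, a0) a non-zero-divisor of A, and
   x_(a0, a0) ^ N * f in J forces f in J. *)

Section Regularity.
Context {disp : Order.disp_t} {P : finPOrderType disp}.

Lemma exists_minimal_le (b : P) :
  exists2 c : P, (forall d : P, ~~ (d < c)%O) & (c <= b)%O.
Proof.
have [n] := ubnP #|[set c | (c < b)%O]|; elim: n b => // n IHn b.
rewrite ltnS => card_lt_b.
have [c c_lt_b | b_min] := pickP (fun c => (c < b)%O); last first.
  by exists b => // d; rewrite b_min.
have [|e e_min e_le_c] := IHn c; last by exists e => //; exact: le_trans (ltW c_lt_b).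
apply: leq_trans card_lt_b; apply: proper_card; apply/properP; split.
  by apply/subsetP => d; rewrite !inE => /lt_trans; apply.
by exists c; rewrite !inE ?c_lt_b ?ltxx.
Qed.

Lemma unique_minimal_le (a0 b : P) : unique_minimal a0 -> (a0 <= b)%O.
Proof. by move=> a0_min; have [c /a0_min ->] := exists_minimal_le b. Qed.

Context {D : {set P * P}} {A : comAlgType CC} {p : P * P -> A}.

Lemma standard_cons (x : P * P) (s : seq (P * P)) :
  x \in D -> (forall y, doset_le x y) -> standard D s -> standard D (x :: s).
Proof.
rewrite /standard /= => -> x_le /andP[-> sorted_s].
by case: s sorted_s => //= y s ->; rewrite x_le.
Qed.

Lemma lincomb_cons (x : P * P) (S : seq (CC * seq (P * P))) :
  lincomb p [seq (c.1, x :: c.2) | c <- S] = p x * lincomb p S.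
Proof.
rewrite /lincomb big_map mulr_sumr; apply: eq_bigr => c _.
by rewrite /pmon big_cons scalerAr.
Qed.

Definition merge_lincomb (S : seq (CC * seq (P * P))) :=
  [seq (\sum_(c <- S | c.2 == s) c.1, s) | s <- undup (map snd S)].

Lemma merge_lincomb_uniq S : uniq (map snd (merge_lincomb S)).
Proof. by rewrite -map_comp map_id undup_uniq. Qed.

Lemma all_merge_lincomb {Q : pred (seq (P * P))} {S} :
  all (fun c => Q c.2) S -> all (fun c => Q c.2) (merge_lincomb S).
Proof.
move=> /allP QS; rewrite all_map; apply/allP => s /=.
by rewrite mem_undup => /(@mapP _ _ snd S s) [c /QS Qc ->].
Qed.

Lemma lincomb_merge S : lincomb p (merge_lincomb S) = lincomb p S.
Proof.
set u := undup (map snd S).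
have -> : lincomb p S = \sum_(c <- S) \sum_(s <- u | s == c.2) c.1 *: pmon p s.
  apply: eq_big_seq => c cS.
  by rewrite -big_filter filter_pred1_uniq ?undup_uniq ?big_seq1 ?mem_undup ?map_f.
rewrite (exchange_big_dep xpredT) //= /lincomb big_map; apply: eq_bigr => s _.
by rewrite scaler_suml; apply: eq_bigl => c; rewrite eq_sym.
Qed.

Hypotheses (standard_span : forall a : A, exists S : seq (CC * seq (P * P)),
      all (fun c => standard D c.2) S /\ a = lincomb p S)
  (standard_free : forall S : seq (CC * seq (P * P)),
      uniq (map snd S) -> all (fun c => standard D c.2) S ->
      lincomb p S = 0 -> all (fun c => c.1 == 0) S).

Lemma lreg_p_minimal {a0 : P} :
  (a0, a0) \in D -> unique_minimal a0 -> GRing.lreg (p (a0, a0)).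
Proof.
move=> a0D a0_min.
apply: mulrI0_lreg => y; have [S [S_std ->]] := standard_span y.
rewrite -lincomb_merge -lincomb_cons; set T := merge_lincomb S => T0.
have T_std : all (fun c => standard D c.2) T := all_merge_lincomb S_std.
have T'_uniq : uniq (map snd [seq (c.1, (a0, a0) :: c.2) | c <- T]).
  rewrite -map_comp (map_comp (cons _) snd) map_inj_uniq ?merge_lincomb_uniq //.
  by move=> s t [].
have T'_std : all (fun c => standard D c.2) [seq (c.1, (a0, a0) :: c.2) | c <- T].
  rewrite all_map; apply: sub_all T_std => c /= /standard_cons; apply => // x.
  exact: unique_minimal_le.
have := standard_free _ T'_uniq T'_std T0; rewrite all_map => /allP T_coef0.
by rewrite /lincomb big_seq big1 // => c /T_coef0 /eqP /= ->; rewrite scale0r.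
Qed.

End Regularity.

Lemma asl_eval_XnM (disp : Order.disp_t) (P : finPOrderType disp)
    (D : {set P * P}) (A : comAlgType CC) (p : P * P -> A)
    (i : 'I_#|D|) (N : nat) (f : {mpoly CC[#|D|]}) :
  asl_eval D p ('X_i ^+ N * f) = p (enum_val i) ^+ N * asl_eval D p f.
Proof.
rewrite /asl_eval; have -> : (fun c : CC => c%:A) = in_alg A by [].
by rewrite rmorphM rmorphXn /= mmapX mmap1U.
Qed.

Theorem theorem3p7 (disp : Order.disp_t) (P : finPOrderType disp)
  (D : {set P * P}) (A : comAlgType CC) (G : nat -> {pred A})
  (p : P * P -> A) :
  is_doset D ->
  (exists a0 : P, unique_minimal a0) ->
  is_ASL D G p ->
  forall (f : {mpoly CC[#|D|]}) (N : nat),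
    (forall i : 'I_#|D|, asl_eval D p ('X_i ^+ N * f) = 0) ->
    asl_eval D p f = 0.
Proof.
move=> [D_refl _ _] [a0 a0_min] [_ _ [span free] _ _] f N evalXf.
have a0D : (a0, a0) \in D := D_refl a0.
apply: (lregX (n := N) (lreg_p_minimal span free a0D a0_min)).
by rewrite mulr0 -(enum_rankK_in a0D a0D) -asl_eval_XnM evalXf.
Qed.
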